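(* Let $A$ be a nonempty finite set of $n$ alternatives. A choice rule $C$ on $A$ is (capacity-constrained) lexicographic if and only if it satisfies capacity-filling, gross substitutes, monotonicity, and the capacity-wise weak axiom of revealed preference (CWARP).
   Context: Let $\mathcal{A}$ be the set of all nonempty subsets of $A$. A choice rule is a map $C$ assigning to each $(S,q)\in\mathcal{A}\times\{1,\dots,n\}$ a nonempty set $C(S,q)\subseteq S$ with $|C(S,q)|\le q$; write $R(S,q)=S\setminus C(S,q)$. A priority ordering is a complete, transitive, antisymmetric binary relation on $A$; a priority profile is a list $(\succ_1,\dots,\succ_n)$ of $n$ priority orderings. $C$ is lexicographic for $(\succ_1,\dots,\succ_n)$ if for every $(S,q)$, $C(S,q)$ is obtained by choosing the $\succ_1$-highest alternative in $S$, then the $\succ_2$-highest among the remaining ones, and so on, until $q$ alternatives are chosen or none is left; $C$ is lexicographic if it is lexicographic for some priority profile. Capacity-filling: $|C(S,q)|=\min\{|S|,q\}$ for all $(S,q)$. Gross substitutes: for each $(S,q)$ and $a,b\in S$ with $a\ne b$, $a\in C(S,q)$ implies $a\in C(S\setminus\{b\},q)$. Monotonicity: $C(S,q)\subseteq C(S,q+1)$ for all $S\in\mathcal{A}$, $q\in\{1,\dots,n-1\}$. For $q\in\{2,\dots,n\}$, $a$ is revealed to be preferred to $b$ at $q$ if there is $S\in\mathcal{A}$ with $a,b\notin C(S,q-1)$, $a\in C(S,q)$ and $b\in R(S,q)$. CWARP: for each $q\in\{2,\dots,n\}$ and $a,b\in A$, if $a$ is revealed to be preferred to $b$ at $q$ then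 $b$ is not revealed to be preferred to $a$ at $q$. *)

From mathcomp Require Import all_boot.
Set Implicit Arguments. Unset Strict Implicit. Unset Printing Implicit Defensive.

Section ChoiceRules.
Variable A : finType.

(* A choice rule is a map C : {set A} -> nat -> {set A}; only its values on
   nonempty S and capacities q in {1,...,n}, n = #|A|, matter. *)
Definition choice_rule (C : {set A} -> nat -> {set A}) : Prop :=
  forall S q, S != set0 -> 0 < q <= #|A| ->
    [/\ C S q \subset S, C S q != set0 & #|C S q| <= q].

Definition rejected (C : {set A} -> nat -> {set A}) S q := S :\: C S q.

Definition priority (r : rel A) : Prop :=
  [/\ (forall x y, r x y || r y x),
      (forall x y z, r x y -> r y z -> r x z)
    & (forall x y, r x y -> r y x -> x = y)].

Definition profile := 'I_#|A| -> rel A.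

Definition priority_profile (P : profile) : Prop := forall i, priority (P i).

(* The ordering used at step k+1 (k is 0-based); irrelevant default beyond n. *)
Definition prof_at (P : profile) (k : nat) : rel A :=
  match insub k with Some i => P i | None => fun _ _ => true end.

Definition lex_step (r : rel A) (S chosen : {set A}) : {set A} :=
  match [pick x in S :\: chosen | [forall y in S :\: chosen, r x y]] with
  | Some x => x |: chosen
  | None => chosen
  end.

Fixpoint lex_chosen (P : profile) (S : {set A}) (k : nat) : {set A} :=
  match k with
  | 0 => set0
  | k'.+1 => lex_step (prof_at P k') S (lex_chosen P S k')
  end.

Definition lexicographic_for (C : {set A} -> nat -> {set A}) (P : profile) : Prop :=
  forall S q, S != set0 -> 0 < q <= #|A| -> C S q = lex_chosen P S q.

Definition lexicographic (C : {set A} -> nat -> {set A}) : Prop :=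
  exists P : profile, priority_profile P /\ lexicographic_for C P.

Definition capacity_filling (C : {set A} -> nat -> {set A}) : Prop :=
  forall S q, S != set0 -> 0 < q <= #|A| -> #|C S q| = minn #|S| q.

Definition gross_substitutes (C : {set A} -> nat -> {set A}) : Prop :=
  forall S q, S != set0 -> 0 < q <= #|A| ->
    forall a b, a \in S -> b \in S -> a != b ->
      a \in C S q -> a \in C (S :\ b) q.

Definition monotonicity (C : {set A} -> nat -> {set A}) : Prop :=
  forall S q, S != set0 -> 0 < q <= #|A|.-1 -> C S q \subset C S q.+1.

Definition revealed_pref (C : {set A} -> nat -> {set A}) (q : nat) (a b : A) : Prop :=
  exists S, [/\ S != set0, a \notin C S q.-1, b \notin C S q.-1,
                a \in C S q & b \in rejected C S q].

Definition CWARP (C : {set A} -> nat -> {set A}) : Prop :=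
  forall q, 2 <= q <= #|A| -> forall a b,
    revealed_pref C q a b -> ~ revealed_pref C q b a.

End ChoiceRules.

From mathcomp Require Import all_boot zify.
Set Implicit Arguments. Unset Strict Implicit. Unset Printing Implicit Defensive.

(* A lexicographic rule builds C(S,q) from C(S,q-1) by adding the
   >_q-best remaining alternative, and each axiom follows along this
   recursion; for gross substitutes, deleting an alternative can only bring
   the others forward.
   Conversely, monotonicity and capacity filling make C(S,q) equal to
   C(S,q-1) plus one new alternative. Gross substitutes and capacity filling
   show that C(-,q) is unchanged when rejected alternatives are deleted;
   with CWARP (and directly for q = 1) this makes revealed preference at q
   acyclic. Any linear extension >_q of it, for q = 1, ..., n, then
   generates C lexicographically. *)

Section LexStep.
Variable A : finType.
Implicit Types (r : rel A) (S T ch : {set A}).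

(* The maximum is the element dominating the most elements of T. *)
Lemma priority_max r T : priority r -> T != set0 ->
  exists2 x, x \in T & forall y, y \in T -> r x y.
Proof.
case=> total trans _ /set0Pn[x0 Tx0].
have [x Tx xmax] := arg_maxnP (fun x => #|[set y in T | r x y]|) Tx0.
exists x => // y Ty; apply: contraT => Nrxy.
have ryx : r y x by move: (total x y); rewrite (negbTE Nrxy).
have : #|[set z in T | r x z]| < #|[set z in T | r y z]|.
  apply: proper_card; apply/properP; split.
    by apply/subsetP => z; rewrite !inE => /andP[-> /(trans _ _ _ ryx)].
  by exists y; rewrite !inE ?Ty ?(negbTE Nrxy) //= -[r y y]orbb total.
by move=> lt; have := xmax y Ty; rewrite /= leqNgt lt.
Qed.

Variant lex_step_spec r S ch : {set A} -> Prop :=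
  | LexStepNone of S :\: ch = set0 : lex_step_spec r S ch ch
  | LexStepAdd x of x \in S :\: ch & (forall y, y \in S :\: ch -> r x y) :
      lex_step_spec r S ch (x |: ch).

Lemma lex_stepP r S ch : priority r -> lex_step_spec r S ch (lex_step r S ch).
Proof.
move=> pr; rewrite /lex_step; case: pickP => [x /andP[xD /forall_inP]|none].
  by constructor.
constructor; apply/eqP; apply: contraT => /(priority_max pr)[x xD xmax].
by rewrite -(none x) xD; apply/forall_inP.
Qed.

Lemma lex_step_sub r S ch : ch \subset S -> lex_step r S ch \subset S.
Proof.
move=> chS; rewrite /lex_step; case: pickP => // x /andP[].
by rewrite inE => /andP[_ xS] _; rewrite subUset sub1set xS.
Qed.

Lemma sub_lex_step r S ch : ch \subset lex_step r S ch.
Proof. by rewrite /lex_step; case: pickP => // x _; apply: subsetUr. Qed.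

End LexStep.

Section Lexicographic.
Variables (A : finType) (P : profile A).
Hypothesis P_priority : priority_profile P.
Implicit Types (S : {set A}) (k : nat).

Lemma priority_prof_at k : k < #|A| -> priority (prof_at P k).
Proof. by move=> kn; rewrite /prof_at insubT. Qed.

Lemma lex_chosen_sub S k : lex_chosen P S k \subset S.
Proof. by elim: k => [|k IH] /=; [apply: sub0set | apply: lex_step_sub]. Qed.

Lemma lex_chosenS S k : lex_chosen P S k \subset lex_chosen P S k.+1.
Proof. exact: sub_lex_step. Qed.

Lemma card_lex_chosen S k : k <= #|A| -> #|lex_chosen P S k| = minn #|S| k.
Proof.
elim: k => [|k IH] kn /=; first by rewrite cards0 minn0.
have chS := lex_chosen_sub S k; have {}IH := IH (ltnW kn).
case: (lex_stepP S (lex_chosen P S k) (priority_prof_at kn)) => [|x].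
  move/eqP; rewrite setD_eq0 => Sch.
  have chE : lex_chosen P S k = S by apply/eqP; rewrite eqEsubset chS.
  by move: IH; rewrite chE; lia.
rewrite inE => /andP[xch xS] _; rewrite cardsU1 xch.
have : #|lex_chosen P S k| < #|S|.
  by apply: proper_card; apply/properP; split => //; exists x.
by lia.
Qed.

Lemma lex_chosen_setD1 S b k : k <= #|A| ->
  lex_chosen P S k :\ b \subset lex_chosen P (S :\ b) k.
Proof.
elim: k => [|k IH] kn /=; first by rewrite set0D sub0set.
have {}IH := IH (ltnW kn); have pr := priority_prof_at kn.
set ch := lex_chosen P S k; set ch' := lex_chosen P (S :\ b) k.
have chch' : ch :\ b \subset lex_step (prof_at P k) (S :\ b) ch'.
  exact: subset_trans IH (sub_lex_step _ _ _).
case: (lex_stepP S ch pr) => // x xD xmax.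
apply/subsetP => z; rewrite setDUl inE => /orP[|]; last exact: (subsetP chch').
rewrite !inE => /andP[zb /eqP zx]; subst z.
have [xch'|xch'] := boolP (x \in ch'); first by apply: (subsetP (sub_lex_step _ _ _)).
have xD' : x \in (S :\ b) :\: ch' by move: xD; rewrite !inE xch' zb => /andP[_ ->].
case: (lex_stepP (S :\ b) ch' pr) => [e|y yD' ymax]; first by move: xD'; rewrite e inE.
rewrite !inE (negbTE xch') orbF.
move: yD'; rewrite !inE => /andP[ych' /andP[yb yS]].
have ych : y \notin ch.
  by apply: contra ych' => ych; apply: (subsetP IH); rewrite !inE yb.
have rxy : prof_at P k x y by apply: xmax; rewrite inE ych.
by case: pr => _ _ /(_ _ _ rxy (ymax x xD'))->.
Qed.

Variable C : {set A} -> nat -> {set A}.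
Hypothesis C_lex : lexicographic_for C P.

Lemma lex_capacity_filling : capacity_filling C.
Proof. by move=> S q S0 /andP[q0 qn]; rewrite C_lex ?q0 //; apply: card_lex_chosen. Qed.

Lemma lex_gross_substitutes : gross_substitutes C.
Proof.
move=> S q S0 /andP[q0 qn] a b aS bS ab.
have Sb0 : S :\ b != set0 by apply/set0Pn; exists a; rewrite !inE ab.
rewrite !C_lex ?q0 // => aC.
by apply: (subsetP (lex_chosen_setD1 S b qn)); rewrite !inE ab.
Qed.

Lemma lex_monotonicity : monotonicity C.
Proof.
move=> S q S0 /andP[q0 qn]; rewrite !C_lex ?q0 //; first exact: lex_chosenS.
all: lia.
Qed.

(* At capacity q.+1 the only new choice is the prof_at P q-maximum of the rest. *)
Lemma lex_revealed_pref q x y : 0 < q < #|A| ->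
  revealed_pref C q.+1 x y -> prof_at P q x y /\ x != y.
Proof.
move=> /andP[q0 qn] [S [S0 xn yn xC]].
rewrite /rejected inE => /andP[yC yS].
split; last by apply: contraNneq yC => <-.
move: xn yn xC yC => /=; rewrite !C_lex ?q0 ?(ltnW qn) //=.
case: (lex_stepP S (lex_chosen P S q) (priority_prof_at qn)) => [_ /negP//|z zD zmax].
move=> xn yn; rewrite !inE (negbTE xn) (negbTE yn) !orbF => /eqP-> _.
by apply: zmax; rewrite inE yn.
Qed.

Lemma lex_CWARP : CWARP C.
Proof.
move=> [//|q] /andP[q2 qn] a b.
have Hq : 0 < q < #|A| by lia.
move=> /(lex_revealed_pref Hq)[rab ab] /(lex_revealed_pref Hq)[rba _].
have [_ _ anti] := priority_prof_at qn.
by move: ab; rewrite (anti _ _ rab rba) eqxx.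
Qed.

End Lexicographic.

Lemma path_mem_pred (T : eqType) (e : rel T) x p z : path e x p -> z \in p ->
  exists2 w, w \in x :: p & e w z.
Proof.
elim: p x => [//|y p IH] x /= /andP[exy py]; rewrite inE => /orP[/eqP->|zp].
  by exists x; rewrite ?mem_head.
by have [w wp ewz] := IH y py zp; exists w; rewrite // inE wp orbT.
Qed.

Section Converse.
Variables (A : finType) (C : {set A} -> nat -> {set A}).
Hypothesis A_gt0 : 0 < #|A|.
Hypothesis C_rule : choice_rule C.
Hypotheses (C_cf : capacity_filling C) (C_gs : gross_substitutes C).
Hypotheses (C_mono : monotonicity C) (C_cwarp : CWARP C).
Implicit Types (S T U K : {set A}) (x y z w : A) (q : nat).

Lemma C_sub S q : S != set0 -> 0 < q <= #|A| -> C S q \subset S.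
Proof. by move=> S0 Hq; case: (C_rule S0 Hq). Qed.

Lemma mem_C_subset q S T z : 0 < q <= #|A| -> S \subset T -> z \in S ->
  z \in C T q -> z \in C S q.
Proof.
move=> Hq; have [k] := ubnP #|T :\: S|; elim: k T => // k IH T.
move=> ltTk sST zS zC; case: (set_0Vmem (T :\: S)) => [/eqP|[b]].
  by rewrite setD_eq0 => sTS; have -> : S = T by apply/eqP; rewrite eqEsubset sST.
rewrite inE => /andP[bS bT].
have zb : z != b by apply: contraNneq bS => <-.
have T0 : T != set0 by apply/set0Pn; exists z; apply: (subsetP sST).
apply: (IH (T :\ b)) => //.
- rewrite -ltnS; apply: leq_trans ltTk; rewrite ltnS; apply: proper_card; apply/properP.
  by split; [apply: setSD; apply: subD1set | exists b; rewrite !inE ?eqxx ?bS ?bT].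
- by rewrite subsetD1 sST bS.
- by apply: C_gs => //; apply: (subsetP sST).
Qed.

Lemma C_restrict q S U : 0 < q <= #|A| -> S != set0 ->
  C S q \subset U -> U \subset S -> C U q = C S q.
Proof.
move=> Hq S0 sCU sUS.
have sub : C S q \subset C U q.
  by apply/subsetP => z zC; apply: (mem_C_subset Hq sUS) => //; apply: (subsetP sCU).
have U0 : U != set0.
  have [_ /set0Pn[z zC] _] := C_rule S0 Hq.
  by apply/set0Pn; exists z; apply: (subsetP sCU).
apply/esym/eqP; rewrite eqEcard sub (C_cf U0 Hq) (C_cf S0 Hq).
by have := subset_leq_card sUS; lia.
Qed.

(* C(S,q-1), except that C(S,0) is unconstrained and replaced by set0. *)
Definition Cprev S q : {set A} := if q <= 1 then set0 else C S q.-1.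

Lemma Cprev_sub S q : S != set0 -> 0 < q <= #|A| -> Cprev S q \subset C S q.
Proof.
move=> S0 Hq; rewrite /Cprev; case: ifP => q1; first exact: sub0set.
have -> : C S q = C S q.-1.+1 by congr (C S _); lia.
by apply: C_mono => //; lia.
Qed.

Lemma card_Cprev S q : S != set0 -> 0 < q <= #|A| -> #|Cprev S q| = minn #|S| q.-1.
Proof.
move=> S0 Hq; rewrite /Cprev; case: ifP => q1; last by rewrite C_cf //; lia.
have -> : q.-1 = 0 by lia.
by rewrite cards0 minn0.
Qed.

Lemma notin_Cprev_setT S q z : 0 < q <= #|A| -> z \in S -> z \notin Cprev S q ->
  z \notin Cprev [set: A] q.
Proof.
move=> Hq zS; rewrite /Cprev; case: ifP => // q1.
by apply: contra => zC; apply: (mem_C_subset _ (subsetT S)) => //; lia.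
Qed.

Lemma C_Cprev_large S q : S != set0 -> 0 < q <= #|A| -> q <= #|S| ->
  exists2 x, x \in S :\: Cprev S q & C S q = x |: Cprev S q.
Proof.
move=> S0 Hq qS; have sb := Cprev_sub S0 Hq.
have /cards1P[x Dx] : #|C S q :\: Cprev S q| == 1.
  by rewrite cardsD (setIidPr sb) (card_Cprev S0 Hq) (C_cf S0 Hq); apply/eqP; lia.
have : x \in C S q :\: Cprev S q by rewrite Dx set11.
rewrite inE => /andP[xb xC]; exists x; first by rewrite inE xb (subsetP (C_sub S0 Hq)).
by rewrite -Dx setUC -{1}(setIidPr sb) setID.
Qed.

Lemma C_Cprev_small S q : S != set0 -> 0 < q <= #|A| -> #|S| < q ->
  Cprev S q = S /\ C S q = S.
Proof.
move=> S0 Hq Sq; have sbS := subset_trans (Cprev_sub S0 Hq) (C_sub S0 Hq).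
have bS : Cprev S q = S by apply/eqP; rewrite eqEcard sbS (card_Cprev S0 Hq); lia.
split => //; apply/eqP; rewrite eqEsubset C_sub //=.
by rewrite -{1}bS Cprev_sub.
Qed.

Definition rpref q x y : bool :=
  [exists S, [&& S != set0, x \notin Cprev S q, y \notin Cprev S q,
                 x \in C S q & y \in S :\: C S q]].

Lemma rprefP q x y :
  reflect (exists S, [/\ S != set0, x \notin Cprev S q, y \notin Cprev S q,
                         x \in C S q & y \in S :\: C S q])
          (rpref q x y).
Proof.
by apply: (iffP existsP) => [[S /and5P[]]|[S []]] *; exists S; [split | apply/and5P].
Qed.

Lemma rpref_intro S q x y : S != set0 -> 0 < q <= #|A| ->
  x \in C S q -> x \notin Cprev S q -> y \in S :\: C S q -> rpref q x y.
Proof.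
move=> S0 Hq xC xb yD; apply/rprefP; exists S; split=> //.
move: yD; rewrite inE => /andP[yC _].
by apply: contra yC; apply: (subsetP (Cprev_sub S0 Hq)).
Qed.

Lemma rpref_neq q x y : rpref q x y -> x != y.
Proof.
by case/rprefP=> S [_ _ _ xC]; rewrite inE => /andP[yC _]; apply: contraNneq yC => <-.
Qed.

Lemma rpref_notin_Cprev q x y : 0 < q <= #|A| -> rpref q x y ->
  y \notin Cprev [set: A] q.
Proof.
by move=> Hq /rprefP[S [_ _ yb _]]; rewrite inE => /andP[_ /notin_Cprev_setT]; apply.
Qed.

Lemma rpref_revealed_pref q x y : 1 < q -> rpref q x y -> revealed_pref C q x y.
Proof.
move=> q1 /rprefP[S [S0 xb yb xC yD]]; exists S.
have CprevE : Cprev S q = C S q.-1 by rewrite /Cprev leqNgt q1.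
by rewrite -CprevE.
Qed.

Lemma rpref1_C_pair x y : rpref 1 x y -> C [set x; y] 1 = [set x].
Proof.
have H1 : 0 < 1 <= #|A| by rewrite A_gt0.
case/rprefP=> S [S0 _ _ xC]; rewrite inE => /andP[_ yS].
have xS : x \in S by apply: (subsetP (C_sub S0 H1)).
have CS : C S 1 = [set x].
  have /cards1P[z Cz] : #|C S 1| == 1.
    by rewrite C_cf // ?H1 //; apply/eqP; move: S0; rewrite -card_gt0; lia.
  by move: xC; rewrite Cz inE => /eqP<-.
rewrite (C_restrict H1 S0) ?CS ?sub1set ?setU11 //.
by rewrite subUset !sub1set xS yS.
Qed.

Lemma rpref_asym q x y : 0 < q <= #|A| -> rpref q x y -> ~~ rpref q y x.
Proof.
move=> Hq rxy; apply/negP => ryx; case: (leqP q 1) => q1.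
  have q1E : q = 1 by lia.
  subst q; have := rpref1_C_pair rxy; rewrite setUC (rpref1_C_pair ryx).
  by move/setP/(_ x); rewrite !inE eqxx eq_sym (negbTE (rpref_neq ryx)).
have q2 : 2 <= q <= #|A| by lia.
exact: (C_cwarp q2 (rpref_revealed_pref q1 rxy) (rpref_revealed_pref q1 ryx)).
Qed.

(* For U = C([set: A], q-1) :|: K, the new alternative of C(U,q) lies in K
   and is then revealed preferred to its own predecessor in K. *)
Lemma no_rpref_pred_closed q K : 0 < q <= #|A| -> K != set0 ->
  ~ (forall z, z \in K -> exists2 w, w \in K & rpref q w z).
Proof.
move=> Hq K0 Kpred.
have KnB z : z \in K -> z \notin Cprev [set: A] q.
  by case/Kpred=> w _ /(rpref_notin_Cprev Hq).
set U := Cprev [set: A] q :|: K.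
have /set0Pn[z0 z0K] := K0.
have U0 : U != set0 by apply/set0Pn; exists z0; rewrite inE z0K orbT.
have T0 : [set: A] != set0 by rewrite -card_gt0 cardsT.
have CprevU : Cprev U q = Cprev [set: A] q.
  rewrite /Cprev; case: ifP => // q1.
  apply: C_restrict => //; first lia.
  by rewrite /U /Cprev q1 subsetUl.
have qU : q <= #|U|.
  have : #|z0 |: Cprev [set: A] q| <= #|U|.
    by apply: subset_leq_card; rewrite subUset sub1set inE z0K orbT subsetUl.
  by rewrite cardsU1 KnB // (card_Cprev T0 Hq) cardsT; lia.
have [x xD CU] := C_Cprev_large U0 Hq qU.
have xK : x \in K by move: xD; rewrite !inE CprevU => /andP[/negbTE->].
have [w wK rwx] := Kpred x xK.
have /negP := rpref_asym Hq rwx; apply; apply: (rpref_intro U0 Hq).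
- by rewrite CU setU11.
- by move: xD; rewrite inE => /andP[].
- by rewrite !inE CU !inE negb_or CprevU KnB // (rpref_neq rwx) wK orbT.
Qed.

Lemma rpref_acyclic q x y : 0 < q <= #|A| -> rpref q x y -> ~~ connect (rpref q) y x.
Proof.
move=> Hq rxy; apply/negP => /connectP[p yp xE].
apply: (no_rpref_pred_closed (K := [set z in y :: p]) Hq).
  by apply/set0Pn; exists y; rewrite !inE eqxx.
move=> z; rewrite !inE => /orP[/eqP->|zp].
  by exists x; rewrite // inE xE mem_last.
by have [w wp rwz] := path_mem_pred yp zp; exists w; rewrite ?inE.
Qed.

Definition height q x := #|[set z | connect (rpref q) x z]|.

Lemma height_lt q x y : 0 < q <= #|A| -> rpref q x y -> height q y < height q x.
Proof.
move=> Hq rxy; apply: proper_card; apply/properP; split.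
  by apply/subsetP => z; rewrite !inE; apply: connect_trans; apply: connect1.
by exists x; rewrite !inE ?connect0 ?(negbTE (rpref_acyclic Hq rxy)).
Qed.

(* Order by height, ties broken by enum_rank: a linear extension of rpref q. *)
Definition key q x := height q x * #|A| + enum_rank x.

Definition rpref_ext q : rel A := fun x y => key q y <= key q x.

Lemma key_inj q : injective (key q).
Proof.
move=> x y /(congr1 (modn^~ #|A|)); rewrite !modnMDl !modn_small ?ltn_ord //.
by move/val_inj/enum_rank_inj.
Qed.

Lemma priority_rpref_ext q : priority (rpref_ext q).
Proof.
split=> [x y|x y z|x y]; rewrite /rpref_ext; first exact: leq_total.
  by move=> yx zy; apply: leq_trans zy yx.
by move=> ? ?; apply: (@key_inj q); apply/eqP; rewrite eqn_leq; apply/andP.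
Qed.

Lemma rpref_key_lt q x y : 0 < q <= #|A| -> rpref q x y -> key q y < key q x.
Proof.
move=> Hq rxy; have := height_lt Hq rxy; rewrite /key.
have := ltn_ord (enum_rank y); set n := #|A|; move=> ry lth.
have : (height q y + 1) * n <= height q x * n by rewrite leq_mul2r addn1 lth orbT.
by lia.
Qed.

Lemma C_lex_step S q : S != set0 -> 0 < q <= #|A| ->
  C S q = lex_step (rpref_ext q) S (Cprev S q).
Proof.
move=> S0 Hq; case: (leqP q #|S|) => qS; last first.
  have [CprevE CE] := C_Cprev_small S0 Hq qS.
  case: (lex_stepP S (Cprev S q) (priority_rpref_ext q)) => [|z]; first by rewrite CE.
  by rewrite CprevE setDv inE.
have [x xD CE] := C_Cprev_large S0 Hq qS.
case: (lex_stepP S (Cprev S q) (priority_rpref_ext q)) => [|z zD zmax].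
  by move/setP/(_ x); rewrite xD inE.
rewrite CE; congr (_ |: _); apply/eqP; apply: contraT => zx.
have rxz : rpref q x z.
  apply: (rpref_intro S0 Hq); first by rewrite CE setU11.
    by move: xD; rewrite inE => /andP[].
  by move: zD; rewrite !inE CE !inE eq_sym (negbTE zx) => /andP[/negbTE-> ->].
by have := zmax x xD; rewrite /rpref_ext leqNgt rpref_key_lt.
Qed.

Definition rpref_profile : profile A := fun i => rpref_ext i.+1.

Lemma CWARP_lexicographic : lexicographic C.
Proof.
exists rpref_profile; split=> [i|S q S0]; first exact: priority_rpref_ext.
elim: q => [//|q IH] /andP[_ qn].
have Hq : 0 < q.+1 <= #|A| by rewrite qn.
rewrite /= /prof_at insubT (C_lex_step S0 Hq) /=; congr lex_step.
rewrite /Cprev; case: q IH qn {Hq} => [//|q] IH qn.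
by rewrite IH // (ltnW qn).
Qed.

End Converse.

Theorem corollary1 (A : finType) (C : {set A} -> nat -> {set A}) :
  0 < #|A| ->
  choice_rule C ->
  (lexicographic C <->
   [/\ capacity_filling C, gross_substitutes C, monotonicity C & CWARP C]).
Proof.
move=> A_gt0 C_rule; split=> [[P [P_priority C_lex]]|[C_cf C_gs C_mono C_cwarp]].
  split; [exact: lex_capacity_filling C_lex | exact: lex_gross_substitutes C_lex
         | exact: lex_monotonicity C_lex | exact: lex_CWARP C_lex].
exact: CWARP_lexicographic.
Qed.
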